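(* Let $\chi:\mathcal H\to\mathcal H_L^\chi\otimes\mathcal H_R^\chi$ be a splitting map. The set $\mathrm{stloc}(\chi)$ of strictly $\chi$-local operators is a Von Neumann subalgebra of $\mathcal L(\mathcal H)$.
   Context: All Hilbert spaces are finite-dimensional and complex. A Von Neumann subalgebra of $\mathcal L(\mathcal H)$ is a $*$-subalgebra closed under adjoint and containing $\mathbb 1_{\mathcal H}$. A splitting map on $\mathcal H$ is an isometry $\chi:\mathcal H\to\mathcal H_L^\chi\otimes\mathcal H_R^\chi$. $A\in\mathcal L(\mathcal H)$ is strictly $\chi$-local if there exists $\tilde A\in\mathcal L(\mathcal H_L^\chi)$ with $A\chi^\dagger=\chi^\dagger(\tilde A\otimes\mathbb 1)$ and $\chi A=(\tilde A\otimes\mathbb 1)\chi$. *)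

(* Complex numbers: R[i] = complex R for R : realType
   (mathcomp-real-closed's complex.v); matrices represent operators on
   finite-dimensional Hilbert spaces C^n with the standard inner product. *)
From mathcomp Require Import all_boot all_order all_algebra.
From mathcomp Require Import complex mxtens.
From mathcomp Require Import reals.
Set Implicit Arguments. Unset Strict Implicit. Unset Printing Implicit Defensive.
Import GRing.Theory Num.Theory.
Local Open Scope ring_scope.

Definition adjmx {C : numClosedFieldType} {m n : nat} (A : 'M[C]_(m, n))
  : 'M[C]_(n, m) := (map_mx Num.conj A)^T.

(* A splitting map H = C^n -> H_L (x) H_R = C^a (x) C^b = C^(a*b)
   (Kronecker ordering) is an isometry: chi^dagger chi = 1. *)
Definition splitting_map {C : numClosedFieldType} {n a b : nat}
  (chi : 'M[C]_(a * b, n)) : Prop := adjmx chi *m chi = 1%:M.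

Definition strictly_local {C : numClosedFieldType} {n a b : nat}
  (chi : 'M[C]_(a * b, n)) (A : 'M[C]_n) : Prop :=
  exists At : 'M[C]_a,
    A *m adjmx chi = adjmx chi *m (At *t (1%:M : 'M[C]_b)) /\
    chi *m A = (At *t (1%:M : 'M[C]_b)) *m chi.

Definition stloc {C : numClosedFieldType} {n a b : nat}
  (chi : 'M[C]_(a * b, n)) : 'M[C]_n -> Prop := strictly_local chi.

(* Von Neumann subalgebra of L(C^n) (finite-dim.): a *-subalgebra, i.e. a
   complex linear subspace closed under products and adjoints, containing 1. *)
Definition von_neumann_subalgebra {C : numClosedFieldType} {n : nat}
  (S : 'M[C]_n -> Prop) : Prop :=
  [/\ S 1%:M,
      forall A B, S A -> S B -> S (A + B),
      forall (c : C) A, S A -> S (c *: A),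
      forall A B, S A -> S B -> S (A *m B)
    & forall A, S A -> S (adjmx A)].

(* The amplification [At |-> At *t 1] is a unital *-homomorphism from L(H_L)
   to L(H_L (x) H_R).  Hence the two intertwining equations defining strict
   locality survive sums, scalar multiples and products (intertwiners compose),
   and taking adjoints exchanges the two equations. *)
From mathcomp Require Import all_boot all_order all_algebra.
From mathcomp Require Import complex mxtens reals.
Set Implicit Arguments. Unset Strict Implicit. Unset Printing Implicit Defensive.
Import GRing.Theory Num.Theory.
Local Open Scope ring_scope.

Section Adjoint.
Variable C : numClosedFieldType.

Lemma adjmxM m n p (A : 'M[C]_(m, n)) (B : 'M[C]_(n, p)) :
  adjmx (A *m B) = adjmx B *m adjmx A.
Proof. by rewrite /adjmx map_mxM trmx_mul. Qed.

Lemma adjmxK m n (A : 'M[C]_(m, n)) : adjmx (adjmx A) = A.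
Proof. by apply/matrixP=> i j; rewrite !mxE conjCK. Qed.

Lemma adjmx1 m : adjmx (1%:M : 'M[C]_m) = 1%:M.
Proof. by rewrite /adjmx map_mx1 trmx1. Qed.

Lemma adjmx_tens m n p q (A : 'M[C]_(m, n)) (B : 'M[C]_(p, q)) :
  adjmx (A *t B) = adjmx A *t adjmx B.
Proof. by rewrite /adjmx map_mxT trmx_tens. Qed.

End Adjoint.

Section Tensor.
Variable R : comPzRingType.

Lemma tensmxDl m n p q (A B : 'M[R]_(m, n)) (D : 'M[R]_(p, q)) :
  (A + B) *t D = A *t D + B *t D.
Proof. by apply/matrixP=> i j; rewrite !mxE mulrDl. Qed.

Lemma tensmxZl m n p q (c : R) (A : 'M[R]_(m, n)) (D : 'M[R]_(p, q)) :
  (c *: A) *t D = c *: (A *t D).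
Proof. by apply/matrixP=> i j; rewrite !mxE mulrA. Qed.

Lemma tens1mx1 m p : (1%:M : 'M[R]_m) *t (1%:M : 'M[R]_p) = 1%:M.
Proof.
apply/matrixP=> i j.
case: (mxtens_indexP i) => i0 i1; case: (mxtens_indexP j) => j0 j1.
rewrite tensmxE !mxE (inj_eq (can_inj (@mxtens_indexK _ _))).
by rewrite -natrM mulnb xpair_eqE.
Qed.

End Tensor.

Section StrictlyLocal.
Variables (C : numClosedFieldType) (n a b : nat) (chi : 'M[C]_(a * b, n)).

Local Notation ampl At := (At *t (1%:M : 'M[C]_b)).

Lemma strictly_local1 : strictly_local chi 1%:M.
Proof. by exists 1%:M; rewrite tens1mx1 !mul1mx !mulmx1. Qed.

Lemma strictly_localD A B :
  strictly_local chi A -> strictly_local chi B -> strictly_local chi (A + B).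
Proof.
move=> [At [A_adj A_chi]] [Bt [B_adj B_chi]]; exists (At + Bt).
by rewrite tensmxDl !mulmxDl !mulmxDr A_adj A_chi B_adj B_chi.
Qed.

Lemma strictly_localZ c A :
  strictly_local chi A -> strictly_local chi (c *: A).
Proof.
move=> [At [A_adj A_chi]]; exists (c *: At).
by rewrite tensmxZl -!scalemxAl -!scalemxAr A_adj A_chi.
Qed.

Lemma strictly_localM A B :
  strictly_local chi A -> strictly_local chi B -> strictly_local chi (A *m B).
Proof.
move=> [At [A_adj A_chi]] [Bt [B_adj B_chi]]; exists (At *m Bt).
have amplM : ampl (At *m Bt) = ampl At *m ampl Bt by rewrite tensmx_mul mulmx1.
rewrite amplM; split.
- by rewrite -mulmxA B_adj !mulmxA A_adj.
- by rewrite mulmxA A_chi -!mulmxA B_chi.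
Qed.

Lemma strictly_local_adj A :
  strictly_local chi A -> strictly_local chi (adjmx A).
Proof.
move=> [At [A_adj A_chi]]; exists (adjmx At).
have amplV : ampl (adjmx At) = adjmx (ampl At) by rewrite adjmx_tens adjmx1.
rewrite amplV; split.
- by rewrite -!adjmxM A_chi.
- by move/(congr1 adjmx): A_adj; rewrite !adjmxM adjmxK.
Qed.

End StrictlyLocal.

Theorem mainTheorem8 (R : realType) (n a b : nat)
  (chi : 'M[R[i]]_(a * b, n)) :
  splitting_map chi -> von_neumann_subalgebra (stloc chi).
Proof.
(* Closure under the *-algebra operations does not use that chi is an isometry. *)
move=> _; split.
- exact: strictly_local1.
- exact: strictly_localD.
- exact: strictly_localZ.
- exact: strictly_localM.
- exact: strictly_local_adj.
Qed.
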